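(* Every finite solvable group has the eigenvalue one property.
   Context: A finite group $K$ has the eigenvalue one property if for every irreducible non-trivial $\mathbb{R}K$-module $W$ of odd dimension, affording $\sigma\colon K\to\mathrm{GL}(W)$, and every $m\in N_{\mathrm{GL}(W)}(\sigma(K))$ of finite order, there is $k\in K$ such that $\sigma(k)m$ has eigenvalue $1$. *)

From HB Require Import structures.
From mathcomp Require Import all_boot all_order all_algebra all_fingroup all_solvable.
From mathcomp Require Import mxrepresentation.
From mathcomp Require Import reals.
Set Implicit Arguments. Unset Strict Implicit. Unset Printing Implicit Defensive.
Import GRing.Theory Num.Theory.
Local Open Scope ring_scope.

(* The eigenvalue one property for a finite group K (here the group G of
   elements of gT), with R a model of the real numbers.  An RK-module W of
   dimension d = n.+1 is given by a matrix representation
   sigma : K -> GL_d(R).  Odd dimension forces d >= 1, so writing d = n.+1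
   loses nothing. *)
Definition eigenvalue_one_property (R : realType) (gT : finGroupType)
    (G : {group gT}) : Prop :=
  forall (n : nat) (sigma : mx_representation R G n.+1),
    odd n.+1 ->
    mx_irreducible sigma ->
    (exists2 g, g \in G & sigma g != 1%:M) ->
    forall m : 'M[R]_n.+1,
      m \in unitmx ->
      (forall g, g \in G -> exists2 h, h \in G & m *m sigma g *m invmx m = sigma h) ->
      (forall h, h \in G -> exists2 g, g \in G & m *m sigma g *m invmx m = sigma h) ->
      (exists2 k : nat, (0 < k)%N & m ^+ k = 1) ->
      exists2 k, k \in G & eigenvalue (sigma k *m m) 1.

(* The proof is an induction on the degree through Clifford theory.  The group
   generated by sigma(K) and m is finite; realised as a permutation group H,
   it contains the image N of K as a solvable normal subgroup acting
   irreducibly.  Going down the derived series of N we find A <| H inside N,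
   acting nontrivially by pairwise commuting matrices.  If the restriction to
   A is homogeneous, each element of A acts on an odd-dimensional simple
   A-module, hence with a real eigenvalue 1 or -1, hence as that scalar on
   the whole space; some a in A acts as -1.  As every element of H has
   eigenvalue 1 or -1 in odd dimension, h or a h has eigenvalue 1.
   Otherwise, the homogeneous components of A are permuted transitively by
   N, so some y h with y in N stabilises a component W; W has odd dimension
   smaller than the degree and the stabiliser of W in N acts irreducibly and
   nontrivially on it, so induction applies. *)

From HB Require Import structures.
From mathcomp Require Import all_boot all_order all_algebra all_fingroup all_solvable.
From mathcomp Require Import mxrepresentation reals polyrcf boolp.
Set Implicit Arguments. Unset Strict Implicit. Unset Printing Implicit Defensive.
Import GRing.Theory Num.Theory.
Local Open Scope ring_scope.

Lemma solvable_normal_der1_subgroup gT (H N K : {group gT}) :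
    (N <| H)%g -> solvable N -> ~~ (N \subset K) ->
  exists A : {group gT}, [/\ (A <| H)%g, A \subset N, ~~ (A \subset K) & A^`(1)%g \subset K].
Proof.
move=> nsNH solN ntN.
have exP : exists i, N^`(i)%g \subset K.
  by case/derivedP: solN => i Ni; exists i; rewrite Ni sub1G.
have [i NiK min_i] := ex_minnP exP.
have i_gt0 : (0 < i)%N.
  by rewrite lt0n; apply: contraNneq ntN => i0; rewrite -[N : {set _}]derg0 -i0.
exists N^`(i.-1)%G; split.
- exact: char_normal_trans (der_char _ _) nsNH.
- exact: der_sub.
- by apply/negP => /min_i; rewrite leqNgt ltn_predL i_gt0.
- by rewrite derg1 -dergSn prednK.
Qed.

Section FieldRepr.
Variable F : fieldType.

Lemma mxmodule_same_image gT1 gT2 (G1 : {group gT1}) (G2 : {group gT2}) n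
    (rG1 : mx_representation F G1 n) (rG2 : mx_representation F G2 n) m (U : 'M_(m, n)) :
    (forall y, y \in G2 -> exists2 x, x \in G1 & rG1 x = rG2 y) ->
  mxmodule rG1 U -> mxmodule rG2 U.
Proof.
by move=> im21 /mxmoduleP modU; apply/mxmoduleP => y /im21[x G1x <-]; apply: modU.
Qed.

Lemma mxsimple_same_image gT1 gT2 (G1 : {group gT1}) (G2 : {group gT2}) n
    (rG1 : mx_representation F G1 n) (rG2 : mx_representation F G2 n) (U : 'M_n) :
    (forall x, x \in G1 -> exists2 y, y \in G2 & rG1 x = rG2 y) ->
    (forall y, y \in G2 -> exists2 x, x \in G1 & rG1 x = rG2 y) ->
  mxsimple rG1 U -> mxsimple rG2 U.
Proof.
move=> im12 im21 [modU nzU minU]; split=> // [|V modV sVU nzV].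
  exact: mxmodule_same_image modU.
apply: minU => //; apply: mxmodule_same_image modV => x /im12[y G2y ->].
by exists y.
Qed.

Lemma subg_repr_comp gT (G H K : {group gT}) n (rG : mx_representation F G n)
    (sHG : H \subset G) (sKH : K \subset H) (sKG : K \subset G) :
  subg_repr (subg_repr rG sHG) sKH = subg_repr rG sKG.
Proof. by congr MxRepresentation; apply: Prop_irrelevance. Qed.

Lemma repr_mx_expg_order gT (G : {group gT}) n (rG : mx_representation F G n) x :
  x \in G -> rG x ^+ #[x]%g = 1.
Proof.
move=> Gx; suff rGX j : rG (x ^+ j)%g = rG x ^+ j by rewrite -rGX expg_order repr_mx1.
elim: j => [|j IHj]; first by rewrite expg0 expr0 repr_mx1.
by rewrite expgS repr_mxM ?groupX // IHj exprS mulmxE.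
Qed.

Lemma centgmx_der1_rker gT (G : {group gT}) n (rG : mx_representation F G n) a :
  G^`(1)%g \subset rker rG -> a \in G -> centgmx rG (rG a).
Proof.
move=> G'ker Ga; apply/centgmxP => b Gb.
have /rkerP[Gab rab1] : [~ a, b]%g \in rker rG by apply: subsetP G'ker _ (mem_commg Ga Gb).
by rewrite -[RHS]mulmx1 -rab1 -!repr_mxM ?groupM ?groupV // [in LHS]commgC.
Qed.

Lemma eigenvalue_root_unity (m k : nat) (B : 'M[F]_m) a :
  B ^+ k = 1 -> eigenvalue B a -> a ^+ k = 1.
Proof.
move=> Bk /eigenvalueP[v vB nz_v].
have vBk j : v *m B ^+ j = a ^+ j *: v.
  elim: j => [|j IHj]; first by rewrite expr0 mulmx1 scale1r.
  by rewrite exprSr -mulmxE mulmxA IHj -scalemxAl vB scalerA -exprSr.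
apply/eqP; rewrite -subr_eq0; apply: contraNT nz_v => nz_ak1.
have: (a ^+ k - 1) *: v == 0 by rewrite scalerBl scale1r -vBk Bk mulmx1 subrr.
by rewrite scaler_eq0 (negPf nz_ak1).
Qed.

Lemma eigenvalue_scalar_mul n (B : 'M[F]_n) a c :
  eigenvalue B a -> eigenvalue (c%:M *m B) (c * a).
Proof.
move=> /eigenvalueP[v vB nz_v]; apply/eigenvalueP; exists v => //.
by rewrite mul_scalar_mx -scalemxAr vB scalerA mulrC.
Qed.

Lemma submod_eigenspace_cap gT (G : {group gT}) n (rG : mx_representation F G n)
    (U : 'M_n) (modU : mxmodule rG U) x a :
  x \in G -> eigenvalue (submod_repr modU x) a -> (U :&: eigenspace (rG x) a)%MS != 0.
Proof.
move=> Gx /eigenvalueP[w wx nz_w]; apply: contraNneq nz_w => UE0.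
rewrite -val_submod_eq0 -submx0 -UE0 sub_capmx val_submodP.
by apply/eigenspaceP; rewrite -(val_submodJ modU) // wx linearZ.
Qed.

Lemma eigenvalue_cap m n (U : 'M[F]_(m, n)) (B : 'M_n) a :
  (U :&: eigenspace B a)%MS != 0 -> eigenvalue B a.
Proof. by apply: contraNneq => E0; rewrite -submx0 -E0 capmxSr. Qed.

Lemma eigenspace1_scalar n (B : 'M[F]_n) a : (1%:M <= eigenspace B a)%MS -> B = a%:M.
Proof. by move/eigenspaceP; rewrite mul1mx scalemx1. Qed.

Lemma rfix_normal_rker gT (G K : {group gT}) n (rG : mx_representation F G n) :
  mx_irreducible rG -> (K <| G)%g -> rfix_mx rG K != 0 -> K \subset rker rG.
Proof.
move=> /mx_irrP[_ irrG] nsKG nzK; have sKG := normal_sub nsKG.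
by rewrite /rker rfix_mx_rstabC // sub1mx irrG ?normal_rfix_mx_module.
Qed.

Lemma component_mx_sub_eigenspace gT (G : {group gT}) n (rG : mx_representation F G n)
    (M : 'M_n) a mu :
    mxsimple rG M -> a \in G -> centgmx rG (rG a) ->
    (M :&: eigenspace (rG a) mu)%MS != 0 ->
  (component_mx rG M <= eigenspace (rG a) mu)%MS.
Proof.
move=> simM Ga /centgmxP cGa nzME.
have modE : mxmodule rG (eigenspace (rG a) mu).
  apply: kermx_centg_module; apply/centgmxP => x Gx.
  by rewrite mulmxBl mulmxBr cGa // scalar_mxC.
have [modM _ minM] := simM.
have sME : (M <= eigenspace (rG a) mu)%MS.
  exact: submx_trans (minM _ (capmx_module modM modE) (capmxSl _ _) nzME) (capmxSr _ _).
have [I [U isoU ->]] := component_mx_def simM.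
apply/sumsmx_subP => i _; have [f _ homf <-] := isoU i.
by apply/eigenspaceP; rewrite -(hom_mxP homf a Ga) (eigenspaceP sME) scalemxAl.
Qed.

Section Clifford.
Variables (gT : finGroupType) (G H : {group gT}) (nsHG : (H <| G)%g).
Variables (n : nat) (rG : mx_representation F G n).
Hypothesis irrG : mx_irreducible rG.
Local Notation rH := (subg_repr rG (normal_sub nsHG)).

Lemma Clifford_rank_simple_dvd M : mxsimple rH M -> (\rank M %| n)%N.
Proof.
move=> simM; have [X /subsetP sXG [defX1 dxX]] := Clifford_basis irrG simM.
have rankX : \rank (\sum_(x in X) M *m rG x)%MS = n by rewrite defX1 mxrank1.
apply/dvdnP; exists #|X|; rewrite -[LHS]rankX (mxdirectP dxX) /= -sum_nat_const.
by apply: eq_bigr => x Xx; rewrite mxrankMfree ?repr_mx_free ?sXG.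
Qed.

Variable sH : socleType rH.

Lemma Clifford_homogeneous_component M :
  (#|sH| <= 1)%N -> mxsimple rH M -> (1%:M <= component_mx rH M)%MS.
Proof.
move=> /fintype_le1P homog simM; rewrite -(Clifford_Socle1 irrG sH).
apply/sumsmx_subP => W _; rewrite (homog (PackSocle (component_socle sH simM)) W).
by rewrite PackSocleK.
Qed.

End Clifford.

Section CliffordCoset.
Variables (gT : finGroupType) (H N A : {group gT}).
Hypotheses (nsNH : (N <| H)%g) (nsAH : (A <| H)%g) (nsAN : (A <| N)%g).
Variables (n : nat) (rho : mx_representation F H n).
Local Notation rN := (subg_repr rho (normal_sub nsNH)).
Hypothesis irrN : mx_irreducible rN.
Variable sA : socleType (subg_repr rN (normal_sub nsAN)).

Lemma Clifford_coset_stabiliser (W : sA) h :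
  h \in H -> exists2 y, y \in N & (y * h)%g \in rstabs rho W.
Proof.
move=> Hh; have Hh' : (h^-1 \in H)%g by rewrite groupV.
have sNH := normal_sub nsNH.
have defrA : subg_repr rN (normal_sub nsAN) = subg_repr rho (normal_sub nsAH).
  exact: subg_repr_comp.
have simM : mxsimple (subg_repr rho (normal_sub nsAH)) (socle_base W).
  by rewrite -defrA; apply: socle_simple.
have simMh := Clifford_simple simM Hh'; have compJ := Clifford_componentJ simM Hh'.
rewrite -defrA in simMh compJ.
pose Wh : sA := PackSocle (component_socle sA simMh).
have defWh : ((Wh : 'M_n) :=: W *m rho h^-1%g)%MS by rewrite PackSocleK; apply: compJ.
have /orbitP[y Ny WyWh] : Wh \in orbit (Clifford_action sA) N W.
  by rewrite (atransPin (subxx _) (Clifford_atrans irrN sA) (in_setT W)) inE.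
have defWy : ((W : 'M_n) *m rho y :=: W *m rho h^-1%g)%MS.
  by apply: eqmx_trans (eqmx_sym (val_Clifford_act W Ny)) _; rewrite WyWh.
have Hy := subsetP sNH y Ny.
exists y => //; rewrite inE groupM //= repr_mxM //.
by rewrite mulmxA (eqmxMr _ defWy) -mulmxA -repr_mxM // mulVg repr_mx1 mulmx1.
Qed.

Variable W : sA.
Local Notation H1 := (rstabs_group rho W).

Lemma Clifford_stabiliser_module : mxmodule (subg_repr rho (rstabs_sub rho W)) W.
Proof. by rewrite /mxmodule rstabs_subg setIid. Qed.

Local Notation rho1 := (submod_repr Clifford_stabiliser_module).

Lemma Clifford_stabiliser_normal : (H1 :&: N <| H1)%g.
Proof. exact: normalGI (rstabs_sub rho W) nsNH. Qed.

Lemma Clifford_stabiliser_irr :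
  mx_irreducible (subg_repr rho1 (normal_sub Clifford_stabiliser_normal)).
Proof.
pose rH1N := subg_repr (subg_repr rho (rstabs_sub rho W))
  (normal_sub Clifford_stabiliser_normal).
have simW : mxsimple rH1N W.
  have defN1 : rstabs rN W = H1 :&: N by rewrite rstabs_subg setIC.
  by apply: mxsimple_same_image (Clifford_rstabs_simple irrN W) => x Sx;
    exists x; rewrite //= -?defN1 // defN1.
have [modW _ _] := simW.
by apply: mxsimple_same_image ((submod_mx_irr modW).2 simW) => x N1x; exists x.
Qed.

Lemma Clifford_stabiliser_ker :
  ~~ (A \subset rker rho) -> ~~ (H1 :&: N \subset rker rho1).
Proof.
move=> ntA; apply: contra ntA => N1ker; have sAN := normal_sub nsAN.
have sAH1 : A \subset H1.
  have := component_mx_module (subg_repr rN sAN) (socle_base W).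
  by rewrite /mxmodule !rstabs_subg !subsetI => /and3P[].
have fixAW : A \subset rstab rN W.
  have : A \subset rker rho1 by apply: subset_trans N1ker; rewrite subsetI sAH1.
  by rewrite rker_submod !rstab_subg !subsetI sAN => /andP[_ ->].
have: A \subset rker rN.
  apply: rfix_normal_rker irrN nsAN _; apply: contraNneq (nz_socle W) => rfix0.
  by rewrite -submx0 -rfix0 -rfix_mx_rstabC.
by rewrite rker_subg subsetI => /andP[].
Qed.

End CliffordCoset.

End FieldRepr.

Lemma real_expr_eq1 (R : realDomainType) (x : R) k :
  (0 < k)%N -> x ^+ k = 1 -> x = 1 \/ x = -1.
Proof.
move=> k_gt0 xk1; have /eqP : `|x| = 1.
  by apply/eqP; rewrite -(pexpr_eq1 k_gt0) ?normr_ge0 // -normrX xk1 normr1.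
by rewrite eqr_norml ler01 andbT => /orP[] /eqP; [left | right].
Qed.

Section RealClosedRepr.
Variable R : rcfType.

Lemma odd_mx_eigenvalue n (B : 'M[R]_n) : odd n -> exists a, eigenvalue B a.
Proof.
move=> odd_n; have [a root_a] : {a | root (char_poly B) a}.
  by apply: odd_poly_root; rewrite size_char_poly /= negbK.
by exists a; rewrite eigenvalue_root_char.
Qed.

Lemma repr_odd_eigenvalue_sign gT (G : {group gT}) n (rG : mx_representation R G n) x :
  odd n -> x \in G -> eigenvalue (rG x) 1 \/ eigenvalue (rG x) (-1).
Proof.
move=> odd_n Gx; have [a eig_a] := odd_mx_eigenvalue (rG x) odd_n.
have := eigenvalue_root_unity (repr_mx_expg_order rG Gx) eig_a.
by case/(real_expr_eq1 (order_gt0 x)) => <-; [left | right].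
Qed.

Lemma Clifford_homogeneous_sign gT (N A : {group gT}) (nsAN : (A <| N)%g) n
    (rN : mx_representation R N n) (sA : socleType (subg_repr rN (normal_sub nsAN))) a :
    odd n -> mx_irreducible rN -> A^`(1)%g \subset rker rN -> (#|sA| <= 1)%N ->
  a \in A -> rN a = 1%:M \/ rN a = (-1)%:M.
Proof.
move=> odd_n irrN A'ker homog Aa; set rA := subg_repr rN (normal_sub nsAN).
have [W _ _] := imsetP (Clifford_atrans irrN sA).
have simM := socle_simple W; have [modM _ _] := simM.
have odd_M : odd (\rank (socle_base W)).
  exact: dvdn_odd (Clifford_rank_simple_dvd irrN simM) odd_n.
have cAa : centgmx rA (rA a).
  by apply: centgmx_der1_rker Aa; rewrite rker_subg subsetI der_sub.
have [mu mu_pm eig] : exists2 mu, mu = 1 \/ mu = -1 & eigenvalue (submod_repr modM a) mu.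
  by case: (repr_odd_eigenvalue_sign (submod_repr modM) odd_M Aa) => eig;
    [exists 1; [left | ] | exists (-1); [right | ]].
have -> : rN a = mu%:M.
  apply: eigenspace1_scalar; apply: submx_trans (Clifford_homogeneous_component irrN homog simM) _.
  exact: component_mx_sub_eigenspace simM Aa cAa (submod_eigenspace_cap Aa eig).
by case: mu_pm => ->; [left | right].
Qed.

End RealClosedRepr.

Section SolvableNormal.
Variable R : rcfType.

(* Socle types need a decidable field; classical logic provides one. *)
Let classical_sat : GRing.decidable_field_axiom
  (fun e (f : GRing.formula R) => `[< GRing.holds e f >]).
Proof. by move=> e f; apply: asboolP. Qed.
#[non_forgetful_inheritance]
HB.instance Definition _ := GRing.Field_isDecField.Build R classical_sat.

Theorem solvable_normal_coset_eigenvalue1 d gT (H N : {group gT})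
    (rho : mx_representation R H d) (nsNH : (N <| H)%g) :
    odd d -> solvable N -> mx_irreducible (subg_repr rho (normal_sub nsNH)) ->
    ~~ (N \subset rker rho) ->
  forall h, h \in H -> exists2 k, k \in N & eigenvalue (rho (k * h)%g) 1.
Proof.
elim/ltn_ind: d gT H N rho nsNH => d IHd gT H N rho nsNH odd_d solN irrN ntN h Hh.
have sNH := normal_sub nsNH.
have [A [nsAH sAN ntA A'ker]] := solvable_normal_der1_subgroup nsNH solN ntN.
have nsAN : (A <| N)%g := normalS sAN sNH nsAH.
pose sA := DecSocleType (subg_repr (subg_repr rho (normal_sub nsNH)) (normal_sub nsAN)).
have [homog | inhomog] := leqP #|sA| 1.
  have [a Aa rho_a] : exists2 a, a \in A & rho a = (-1)%:M.
    have [a Aa nt_a] := subsetPn ntA; exists a => //.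
    have A'kerN : A^`(1)%g \subset rker (subg_repr rho (normal_sub nsNH)).
      by rewrite rker_subg subsetI (subset_trans (der_sub 1 A)).
    (* Naming [sA] spares unifying the field and decidable field structures of [R]. *)
    case: (Clifford_homogeneous_sign (sA := sA) odd_d irrN A'kerN homog Aa) => // rNa1.
    by case/negP: nt_a; apply/rkerP; rewrite (subsetP (normal_sub nsAH)).
  case: (repr_odd_eigenvalue_sign rho odd_d Hh) => eig; first by exists 1%g; rewrite ?mul1g.
  exists a; first exact: (subsetP sAN).
  have Ha := subsetP (normal_sub nsAH) a Aa.
  by rewrite repr_mxM // rho_a; have := eigenvalue_scalar_mul (-1) eig; rewrite mulrNN mulr1.
have [W _] := card_gt0P (ltnW inhomog).
have [y Ny stab_yh] := Clifford_coset_stabiliser nsAH irrN W Hh.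
have rankW := Clifford_rank_components irrN W.
have rankW_lt : (\rank (W : 'M_d) < d)%N.
  by rewrite -[ltnRHS]rankW ltn_Pmull // lt0n mxrank_eq0 nz_socle.
have odd_W : odd (\rank (W : 'M_d)).
  by apply: dvdn_odd odd_d; apply/dvdnP; exists #|sA|; rewrite rankW.
have solN1 : solvable (rstabs_group rho W :&: N)%G by apply: solvableS (subsetIr _ _) solN.
have [k N1k eig] := IHd _ rankW_lt _ _ _ _ (Clifford_stabiliser_normal W) odd_W solN1
  (Clifford_stabiliser_irr irrN W) (Clifford_stabiliser_ker irrN W ntA) _ stab_yh.
have [H1k Nk] := setIP N1k.
exists (k * y)%g; first by rewrite groupM.
rewrite -mulgA; apply: eigenvalue_cap (submod_eigenspace_cap _ eig).
by rewrite groupM.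
Qed.

End SolvableNormal.

Section MatrixPermGroup.
Variables (F : fieldType) (n : nat) (S : seq 'M[F]_n).
Hypotheses (S1 : 1%:M \in S) (mulS : {in S &, forall A B, A *m B \in S}).
Hypothesis unitS : {in S, forall A, A \in unitmx}.

Local Notation T := (seq_sub S).
Let one : T := SeqSub S1.

Definition mxseq_mul (s t : T) : T := SeqSub (mulS (ssvalP s) (ssvalP t)).

Lemma mxseq_mulr_inj t : injective (mxseq_mul^~ t).
Proof.
move=> s1 s2 /(congr1 val) /= eq12; apply: val_inj.
exact: can_inj (mulmxK (unitS (ssvalP t))) _ _ eq12.
Qed.

Definition mxperm t : {perm T} := perm (@mxseq_mulr_inj t).

Lemma mxpermE t s : val (mxperm t s) = val s *m val t.
Proof. by rewrite permE. Qed.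

Lemma mxpermM s t : (mxperm s * mxperm t)%g = mxperm (mxseq_mul s t).
Proof. by apply/permP => x; apply: val_inj; rewrite permM !mxpermE mulmxA. Qed.

Lemma mxperm_group_set : group_set [set mxperm t | t : T].
Proof.
apply/group_setP; split.
  apply/imsetP; exists one => //; apply/permP => x; apply: val_inj.
  by rewrite mxpermE perm1 mulmx1.
by move=> _ _ /imsetP[s _ ->] /imsetP[t _ ->]; rewrite mxpermM imset_f.
Qed.

Definition mxperm_group := Group mxperm_group_set.

Definition mxperm_mx (p : {perm T}) : 'M[F]_n := val (p one).

Lemma mxperm_mxE t : mxperm_mx (mxperm t) = val t.
Proof. by rewrite /mxperm_mx mxpermE mul1mx. Qed.

Lemma mxperm_mx_repr : mx_repr mxperm_group mxperm_mx.
Proof.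
split=> [|_ _ /imsetP[s _ ->] /imsetP[t _ ->]]; first by rewrite /mxperm_mx perm1.
by rewrite mxpermM !mxperm_mxE.
Qed.

Definition mxperm_repr := MxRepresentation mxperm_mx_repr.

Definition perm_of_mx (A : 'M_n) : {perm T} := mxperm (insubd one A).

Lemma perm_of_mx_group A : perm_of_mx A \in mxperm_group.
Proof. exact: imset_f. Qed.

Lemma perm_of_mxK A : A \in S -> mxperm_repr (perm_of_mx A) = A.
Proof. by move=> SA; rewrite /= mxperm_mxE insubdK. Qed.

Lemma mxperm_repr_mem p : p \in mxperm_group -> mxperm_repr p \in S.
Proof. by case/imsetP=> t _ ->; rewrite /= mxperm_mxE ssvalP. Qed.

Lemma mxperm_repr_inj : {in mxperm_group &, injective mxperm_repr}.
Proof.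
by move=> _ _ /imsetP[s _ ->] /imsetP[t _ ->]; rewrite /= !mxperm_mxE => /val_inj ->.
Qed.

End MatrixPermGroup.

Section CyclicExtension.
Variables (R : rcfType) (gT : finGroupType) (G : {group gT}) (n : nat).
Variables (sigma : mx_representation R G n) (m : 'M[R]_n) (k : nat).
Hypotheses (m_unit : m \in unitmx) (k_gt0 : (0 < k)%N) (mk1 : m ^+ k = 1).
Hypothesis m_norm :
  forall g, g \in G -> exists2 h, h \in G & m *m sigma g *m invmx m = sigma h.

Lemma expm_norm j g :
  g \in G -> exists2 h, h \in G & m ^+ j *m sigma g = sigma h *m m ^+ j.
Proof.
elim: j g => [|j IHj] g Gg; first by exists g; rewrite ?expr0 ?mul1mx ?mulmx1.
have [h Gh defh] := IHj g Gg; have [h' Gh' mh] := m_norm Gh.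
have {}mh : m *m sigma h = sigma h' *m m by rewrite -mh mulmxKV.
by exists h' => //; rewrite exprS -mulmxE -mulmxA defh mulmxA mh -mulmxA.
Qed.

Definition ext_mxset := [seq sigma g *m m ^+ j | g <- enum G, j <- iota 0 k].

Lemma ext_mxset_mem g j : g \in G -> sigma g *m m ^+ j \in ext_mxset.
Proof.
move=> Gg; rewrite (divn_eq j k) exprD mulnC exprM mk1 expr1n mul1r.
by apply/allpairsP; exists (g, j %% k)%N; rewrite /= mem_enum mem_iota ltn_mod k_gt0.
Qed.

Lemma ext_mxsetP A :
  A \in ext_mxset -> exists2 g, g \in G & exists j, A = sigma g *m m ^+ j.
Proof.
by case/allpairsP=> [[g j] /= [+ _ ->]]; rewrite mem_enum => Gg; exists g => //; exists j.
Qed.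

Lemma ext_mxset1 : 1%:M \in ext_mxset.
Proof. by have := ext_mxset_mem 0 (group1 G); rewrite repr_mx1 expr0 mulmx1. Qed.

Lemma ext_mxset_mul : {in ext_mxset &, forall A B, A *m B \in ext_mxset}.
Proof.
move=> _ _ /ext_mxsetP[g Gg [i ->]] /ext_mxsetP[g' Gg' [j ->]].
have [h Gh defh] := expm_norm i Gg'.
have -> : sigma g *m m ^+ i *m (sigma g' *m m ^+ j) = sigma (g * h)%g *m (m ^+ i *m m ^+ j).
  by rewrite repr_mxM // -!mulmxA; congr (_ *m _); rewrite !mulmxA defh.
by rewrite mulmxE -exprD ext_mxset_mem ?groupM.
Qed.

Lemma ext_mxset_unit : {in ext_mxset, forall A, A \in unitmx}.
Proof.
move=> _ /ext_mxsetP[g Gg [j ->]]; rewrite unitmx_mul repr_mx_unit //=.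
by elim: j => [|j IHj]; [apply: unitmx1 | rewrite exprS -mulmxE unitmx_mul m_unit].
Qed.

Lemma ext_mxset_norm A g :
  A \in ext_mxset -> g \in G -> exists2 h, h \in G & A *m sigma g = sigma h *m A.
Proof.
case/ext_mxsetP=> g1 Gg1 [j ->] Gg; have [h Gh defh] := expm_norm j Gg.
exists (g1 * h * g1^-1)%g; first by rewrite !groupM ?groupV.
rewrite -mulmxA defh mulmxA [RHS]mulmxA -[in RHS]repr_mxM ?groupM ?groupV //.
by rewrite mulgKV repr_mxM.
Qed.

Lemma ext_mxset_sigma g : g \in G -> sigma g \in ext_mxset.
Proof. by move=> Gg; have := ext_mxset_mem 0 Gg; rewrite expr0 mulmx1. Qed.

Lemma ext_mxset_m : m \in ext_mxset.
Proof. by have := ext_mxset_mem 1 (group1 G); rewrite repr_mx1 expr1 mul1mx. Qed.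

Local Notation H := (mxperm_group ext_mxset1 ext_mxset_mul ext_mxset_unit).
Local Notation rho := (mxperm_repr ext_mxset1 ext_mxset_mul ext_mxset_unit).
Local Notation pmx := (perm_of_mx ext_mxset1 ext_mxset_mul ext_mxset_unit).
Local Notation rho_inj := (@mxperm_repr_inj _ _ _ ext_mxset1 ext_mxset_mul ext_mxset_unit).
Local Notation pmx_in := (@perm_of_mx_group _ _ _ ext_mxset1 ext_mxset_mul ext_mxset_unit).

Lemma ext_morphM : {in G &, {morph pmx \o sigma : x y / (x * y)%g}}.
Proof.
move=> x y Gx Gy /=; apply: rho_inj; rewrite ?groupM ?perm_of_mx_group //.
rewrite [RHS]repr_mxM ?perm_of_mx_group // !perm_of_mxK ?ext_mxset_sigma ?groupM //.
exact: repr_mxM.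
Qed.

Definition ext_morph := Morphism ext_morphM.
Definition ext_image := (ext_morph @* G)%G.

Lemma ext_morphK g : g \in G -> rho (ext_morph g) = sigma g.
Proof. by move=> Gg; apply: perm_of_mxK; apply: ext_mxset_sigma. Qed.

Lemma ext_image_normal : (ext_image <| H)%g.
Proof.
have sNH : ext_image \subset H.
  by apply/subsetP => _ /morphimP[g Gg _ ->]; apply: perm_of_mx_group.
rewrite /normal sNH; apply/subsetP => q Hq; rewrite inE.
apply/subsetP => _ /imsetP[_ /morphimP[g Gg _ ->] ->].
have Hq' : (q^-1 \in H)%g by rewrite groupV.
have Hg : ext_morph g \in H by apply: perm_of_mx_group.
have [h Gh defh] := ext_mxset_norm (mxperm_repr_mem Hq') Gg.
suff -> : (ext_morph g ^ q)%g = ext_morph h by apply: mem_morphim.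
apply: rho_inj; rewrite ?groupJ ?perm_of_mx_group //.
rewrite conjgE !repr_mxM ?groupM // ext_morphK // mulmxA defh -mulmxA -repr_mxM //.
by rewrite mulVg repr_mx1 mulmx1 ext_morphK.
Qed.

Lemma ext_image_irr :
  mx_irreducible sigma -> mx_irreducible (subg_repr rho (normal_sub ext_image_normal)).
Proof.
apply: mxsimple_same_image => [g Gg | _ /morphimP[g Gg _ ->]].
  by exists (ext_morph g); rewrite ?ext_morphK ?mem_morphim.
by exists g; rewrite ?ext_morphK.
Qed.

Lemma ext_image_ker :
  (exists2 g, g \in G & sigma g != 1%:M) -> ~~ (ext_image \subset rker rho).
Proof.
case=> g Gg nt_g; apply/subsetPn; exists (ext_morph g); first exact: mem_morphim.
by apply: contra nt_g => /rkerP[_]; rewrite ext_morphK // => ->.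
Qed.

Lemma cyclic_ext_eigenvalue1 :
    solvable G -> odd n -> mx_irreducible sigma -> (exists2 g, g \in G & sigma g != 1%:M) ->
  exists2 g, g \in G & eigenvalue (sigma g *m m) 1.
Proof.
move=> solG odd_n irr nt.
have [p /morphimP[g Gg _ ->] eig] := solvable_normal_coset_eigenvalue1 odd_n
  (morphim_sol _ solG) (ext_image_irr irr) (ext_image_ker nt) (pmx_in m).
exists g => //; move: eig; rewrite repr_mxM ?perm_of_mx_group ?mem_morphim //.
by rewrite ext_morphK // perm_of_mxK ?ext_mxset_m.
Qed.

End CyclicExtension.

Theorem corollary3p2p4 (R : realType) (gT : finGroupType) (G : {group gT}) :
  solvable G -> eigenvalue_one_property R G.
Proof.
(* The reverse normalisation hypothesis follows from the forward one by finiteness. *)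
move=> solG n sigma odd_n irr nt m m_unit m_norm _ [k k_gt0 mk1].
exact: cyclic_ext_eigenvalue1 m_unit k_gt0 mk1 m_norm solG odd_n irr nt.
Qed.
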